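(* Let $\{M_j\}$ be a collection of hermitian $n\times n$ matrices. If a nontrivial subspace $V\subset\mathbb{C}^n$ is minimal with respect to $\mathrm{Span}_{\mathbb{R}}\{M_j\}$, then no real linear combination of $\{M_j\}$ is positive semi-definite on $V$ unless its restriction to $V$ is zero.
   Context: For a hermitian $n\times n$ matrix $M$ and a subspace $V\subset\mathbb{C}^n$, the restriction of $M$ to $V$ is the restriction of the quadratic form $v\mapsto\bar v^TMv$ to $V$. $\mathrm{Span}_{\mathbb{R}}\{M_j\}$ is indefinite on a nontrivial subspace $V$ if no real linear combination of the $M_j$ is positive definite when restricted to $V$. A nontrivial subspace $V$ is minimal with respect to $\mathrm{Span}_{\mathbb{R}}\{M_j\}$ if $\mathrm{Span}_{\mathbb{R}}\{M_j\}$ is indefinite on $V$ but not indefinite on any nontrivial proper subspace of $V$. *)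

(* The complex numbers are an arbitrary numClosedFieldType C
   (e.g. algC, or R[i] for a real closed field R); conjugation is Num.conj. *)
From HB Require Import structures.
From mathcomp Require Import all_boot all_order all_algebra.
From mathcomp Require Import sesquilinear.
Set Implicit Arguments. Unset Strict Implicit. Unset Printing Implicit Defensive.
Import Order.TTheory GRing.Theory Num.Theory.
Local Open Scope ring_scope.

(* Subspaces of C^n are represented as row spaces of matrices (mxalgebra);
   vectors are row vectors 'rV_n. *)

(* The quadratic form v |-> conj(v)^T M v (written here, for row vectors,
   as v M v^*, using the library's form_of_matrix). *)
Definition qform {C : numClosedFieldType} {n : nat} (M : 'M[C]_n) (v : 'rV[C]_n) : C :=
  form_of_matrix Num.conj M v v.

Definition in_real_span {C : numClosedFieldType} {n : nat} {I : Type}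
  (M : I -> 'M[C]_n) (A : 'M[C]_n) : Prop :=
  exists (s : seq I) (c : I -> C),
    (forall j, c j \is Num.real) /\ A = \sum_(j <- s) c j *: M j.

Definition pos_def_on {C : numClosedFieldType} {m n : nat}
  (A : 'M[C]_n) (V : 'M[C]_(m, n)) : Prop :=
  forall v : 'rV[C]_n, (v <= V)%MS -> v != 0 -> 0 < qform A v.

Definition pos_semidef_on {C : numClosedFieldType} {m n : nat}
  (A : 'M[C]_n) (V : 'M[C]_(m, n)) : Prop :=
  forall v : 'rV[C]_n, (v <= V)%MS -> 0 <= qform A v.

Definition zero_on {C : numClosedFieldType} {m n : nat}
  (A : 'M[C]_n) (V : 'M[C]_(m, n)) : Prop :=
  forall v : 'rV[C]_n, (v <= V)%MS -> qform A v = 0.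

Definition span_indefinite_on {C : numClosedFieldType} {m n : nat} {I : Type}
  (M : I -> 'M[C]_n) (V : 'M[C]_(m, n)) : Prop :=
  forall A, in_real_span M A -> ~ pos_def_on A V.

Definition minimal_wrt_span {C : numClosedFieldType} {n : nat} {I : Type}
  (M : I -> 'M[C]_n) (V : 'M[C]_n) : Prop :=
  V != 0 /\ span_indefinite_on M V /\
  forall W : 'M[C]_n, W != 0 -> (W < V)%MS -> ~ span_indefinite_on M W.

(* Suppose q_A(v) > 0 for some v in V. Since A is not definite on V, it has a
   nonzero isotropic vector w in V, and by Cauchy-Schwarz w is A-orthogonal to
   all of V. So the hyperplane H = {h in V | A(h, v) = 0} is a nontrivial proper
   subspace of V, and minimality gives B in the span, positive definite on H.
   Let u = v - p be v minus its B-orthogonal projection p onto H. Every x in V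
   is h + l v = h' + l u with h, h' in H, whence
     q_{tA+B}(x) = t q_A(h) + q_B(h') + |l|^2 (t q_A(v) + q_B(u)),
   which is positive for large t: tA + B is definite on V, a contradiction. *)

From HB Require Import structures.
From mathcomp Require Import all_boot all_order all_algebra.
From mathcomp Require Import sesquilinear ring zify.
From Stdlib Require Import ClassicalEpsilon.
Import Order.TTheory GRing.Theory Num.Theory.
Local Open Scope ring_scope.
Set Implicit Arguments.
Unset Strict Implicit.
Unset Printing Implicit Defensive.

Local Notation "''[' u , v ]_ A" := (form_of_matrix Num.conj A u v)
  (at level 2, format "''[' u ,  v ]_ A").

Section HermitianForms.
Variables (C : numClosedFieldType) (n : nat).
Implicit Types (A : 'M[C]_n) (u v w : 'rV[C]_n) (l : C).

Lemma qformE A v : qform A v = '[v, v]_A.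
Proof. by []. Qed.

Lemma qformDZ A u w l :
  qform A (u + l *: w) =
  qform A u + l^* * '[u, w]_A + l * '[w, u]_A + l * l^* * qform A w.
Proof.
by rewrite !qformE !linearDl /= !linearDr /= !linearZ /= !linearZl_LR /=; ring.
Qed.

Lemma qform_scaleD A B t v : qform (t *: A + B) v = t * qform A v + qform B v.
Proof.
rewrite /qform /form_of_matrix mulmxDr mulmxDl -scalemxAr -scalemxAl.
by rewrite linearD linearZ.
Qed.

Lemma pos_def_semidef_on m A (V : 'M_(m, n)) :
  pos_def_on A V -> pos_semidef_on A V.
Proof.
move=> pdA v vV; have [->|v_neq0] := eqVneq v 0; last exact/ltW/pdA.
by rewrite qformE linear0l.
Qed.

Section Hermitian.
Variables (A : 'M[C]_n) (hA : A \is hermsymmx).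

Lemma hermformC u v : '[u, v]_A = ('[v, u]_A)^*.
Proof. by rewrite (form_of_matrix_is_hermitian (HermitianMx hA)) expr0 mul1r. Qed.

Lemma qform_real v : qform A v \is Num.real.
Proof. by rewrite CrealE qformE -hermformC. Qed.

Lemma qformD_ortho h u l :
  '[h, u]_A = 0 -> qform A (h + l *: u) = qform A h + l * l^* * qform A u.
Proof.
by move=> hu0; rewrite qformDZ (hermformC u h) hu0 conjC0 !mulr0 !addr0.
Qed.

Lemma hermsymmx_orthomxE u v : (u <= orthomx Num.conj A v)%MS = ('[u, v]_A == 0).
Proof. exact: (orthomxE (HermitianMx hA)). Qed.

Lemma pos_semidef_isotropic_ortho m (V : 'M_(m, n)) w v :
  pos_semidef_on A V -> (w <= V)%MS -> (v <= V)%MS ->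
  qform A w = 0 -> '[w, v]_A = 0.
Proof.
move=> psdA wV vV qw0; set y := '[w, v]_A; set q := qform A v.
have q_ge0 : 0 <= q by exact: psdA.
set r := (q + 1)^-1.
have r_gt0 : 0 < r by rewrite invr_gt0 ltr_wpDl.
have rq_lt1 : r * q < 1 by rewrite mulrC ltr_pdivrMr ?mul1r ?ltrDl // ltr_wpDl.
(* Moving from w along v by -r y makes the form r |y|^2 (r q - 2) < 0. *)
have : 0 <= qform A (w + (- (r * y)) *: v).
  by apply: psdA; rewrite addmx_sub ?scalemx_sub.
rewrite qformDZ qw0 -/q -/y (hermformC v w) -/y rmorphN rmorphM /=.
rewrite (conj_Creal (gtr0_real r_gt0)).
have -> : 0 + - (r * y^*) * y + - (r * y) * y^* + - (r * y) * - (r * y^*) * q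
          = (r * (y * y^*)) * (r * q - 2) by ring.
apply: contraTeq => y_neq0.
have ry_gt0 : 0 < r * (y * y^*) by rewrite mulr_gt0 ?mul_conjC_gt0.
have rq2_lt0 : r * q - 2 < 0.
  by rewrite subr_lt0 (lt_trans rq_lt1) ?ltr1n.
by rewrite lt_geF ?pmulr_rlt0.
Qed.

Lemma pos_def_orthomx_proj m (H : 'M_(m, n)) v :
  pos_def_on A H ->
  exists2 p, (p <= H)%MS & (H <= orthomx Num.conj A (v - p))%MS.
Proof.
move=> pdA; set K := orthomx Num.conj A H.
have HK0 : (H :&: K)%MS = 0.
  apply/eqP/rowV0P => x; rewrite sub_capmx => /andP [xH xK].
  have : (x <= orthomx Num.conj A x)%MS.
    exact: (elimT (orthomxP (HermitianMx hA) x H) xK x x (submx_refl x) xH).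
  rewrite hermsymmx_orthomxE -qformE; apply: contraTeq => x_neq0.
  by rewrite gt_eqF ?pdA.
have rkK : (n - \rank H <= \rank K)%N.
  rewrite mxrank_ker leq_sub2l // (leq_trans (mxrankM_maxr _ _)) //.
  by rewrite mxrank_map mxrank_tr.
have /sub_addsmxP [[x y] /= vE] : (v <= H + K)%MS.
  apply: submx_full; rewrite /row_full eqn_leq rank_leq_col /=.
  by rewrite mxrank_disjoint_sum //; move: rkK; lia.
exists (x *m H); first exact: submxMl.
by rewrite (orthomx_sym (HermitianMx hA)) vE addrAC subrr add0r submxMl.
Qed.

End Hermitian.
End HermitianForms.

Section RealSpan.
Variables (C : numClosedFieldType) (n : nat) (I : Type) (M : I -> 'M[C]_n).

Lemma in_real_span_addZ (a : C) (x : I) (B : 'M[C]_n) :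
  a \is Num.real -> in_real_span M B -> in_real_span M (a *: M x + B).
Proof.
move=> a_real [s [c [c_real ->]]].
have [isx isxP] : {isx : pred I & forall j, reflect (j = x) (isx j)}.
  exists (fun j => if excluded_middle_informative (j = x) then true else false).
  by move=> j; case: excluded_middle_informative => ?; constructor.
set k := count isx (x :: s).
have k_neq0 : k%:R != 0 :> C.
  by rewrite pnatr_eq0 /k /=; case: isxP.
(* Spreading a - c x evenly over the k occurrences of x in x :: s. *)
set e := (a - c x) / k%:R.
exists (x :: s), (fun j => c j + (if isx j then e else 0)); split.
  move=> j; rewrite rpredD ?c_real //.
  by case: (isx j); rewrite ?rpred0 ?rpredM ?rpredV ?rpredB ?rpred_nat ?c_real.
apply/esym; under eq_bigr do rewrite scalerDl.
rewrite big_split /= big_cons.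
have -> : \sum_(j <- x :: s) (if isx j then e else 0) *: M j
          = \sum_(j <- x :: s | isx j) e *: M x.
  rewrite [RHS]big_mkcond; apply: eq_bigr => j _.
  by case: isxP => [->|]; rewrite ?scale0r.
rewrite big_const_seq iter_addr_0 -/k.
by rewrite scalerMnl -mulr_natr divfK // addrAC -scalerDl subrKC.
Qed.

Lemma in_real_span_lin (t : C) (A B : 'M[C]_n) :
  t \is Num.real -> in_real_span M A -> in_real_span M B ->
  in_real_span M (t *: A + B).
Proof.
move=> t_real [s [c [c_real ->]]]; elim: s B => [|x s IHs] B spB.
  by rewrite big_nil scaler0 add0r.
rewrite big_cons scalerDr scalerA -addrA.
by apply: in_real_span_addZ; rewrite ?rpredM //; apply: IHs.
Qed.

Lemma in_real_span_hermsymmx (A : 'M[C]_n) :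
  (forall j, M j \is hermsymmx) -> in_real_span M A -> A \is hermsymmx.
Proof.
move=> hM [s [c [c_real ->]]].
apply: (big_ind (fun B : 'M[C]_n => B \is hermsymmx)) => [|B D|j _].
- by apply/is_hermitianmxP; rewrite expr0 scale1r linear0 map_mx0.
- rewrite !qualifE /= !expr0 !scale1r => /eqP hB /eqP hD.
  by rewrite linearD /= map_mxD -hB -hD.
- move: (hM j); rewrite !qualifE /= !expr0 !scale1r => /eqP hMj.
  rewrite linearZ /= map_mxZ -hMj; apply/eqP; congr (_ *: _).
  exact/esym/conj_Creal.
Qed.

End RealSpan.

Section HyperplaneExtension.
Variables (C : numClosedFieldType) (n m : nat).
Variables (A B : 'M[C]_n) (V : 'M[C]_(m, n)) (v : 'rV[C]_n).
Hypotheses (hA : A \is hermsymmx) (psdA : pos_semidef_on A V).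
Hypotheses (vV : (v <= V)%MS) (qAv_neq0 : qform A v != 0).

Lemma hyperplane_ltmx : (V :&: orthomx Num.conj A v < V)%MS.
Proof.
rewrite ltmxE capmxSl /=; apply: contra qAv_neq0 => /(submx_trans vV).
by rewrite sub_capmx hermsymmx_orthomxE // => /andP [].
Qed.

Lemma hyperplane_neq0 :
  ~ pos_def_on A V -> (V :&: orthomx Num.conj A v)%MS != 0.
Proof.
move=> not_pdA; apply/negP => /rowV0P H0; apply: not_pdA => w wV w_neq0.
rewrite lt_def psdA // andbT; apply: contra w_neq0 => /eqP qAw0.
apply/eqP/H0; rewrite sub_capmx wV hermsymmx_orthomxE //=.
by rewrite (pos_semidef_isotropic_ortho hA psdA wV vV qAw0).
Qed.

Hypothesis hB : B \is hermsymmx.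
Hypothesis pdB : pos_def_on B (V :&: orthomx Num.conj A v)%MS.

Lemma hyperplane_pos_def_extension :
  exists2 t, t \is Num.real & pos_def_on (t *: A + B) V.
Proof.
set H := (V :&: orthomx Num.conj A v)%MS; set a := qform A v.
have a_gt0 : 0 < a by rewrite lt_def qAv_neq0 psdA.
have [p pH Hu] := pos_def_orthomx_proj hB v pdB.
set u := v - p; set beta := qform B u.
set t := (`|beta| + 1) / a.
have t_ge0 : 0 <= t by rewrite divr_ge0 ?(ltW a_gt0) ?addr_ge0.
have ta_beta_gt0 : 0 < t * a + beta.
  rewrite divfK ?gt_eqF // addrAC ltr_wpDl //.
  rewrite -[X in _ + X]opprK subr_ge0 -normrN.
  by rewrite real_ler_norm ?rpredN ?qform_real.
exists t => [|x xV x_neq0]; first exact: ger0_real.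
set l := '[x, v]_A / a; set h := x - l *: v.
have hV : (h <= V)%MS by rewrite addmx_sub ?eqmx_opp ?scalemx_sub.
have hv0 : '[h, v]_A = 0.
  by rewrite /h linearBl /= linearZl_LR /= -qformE -/a /l divfK ?subrr ?lt0r_neq0.
have hH : (h <= H)%MS by rewrite sub_capmx hV hermsymmx_orthomxE // hv0 /=.
have [l0|l_neq0] := eqVneq l 0.
  have xh : h = x by rewrite /h l0 scale0r subr0.
  rewrite qform_scaleD; apply: ltr_wpDl; first by rewrite mulr_ge0 ?psdA.
  by rewrite pdB // -xh.
set h' := h + l *: p.
have h'H : (h' <= H)%MS by rewrite addmx_sub ?scalemx_sub.
have h'u0 : '[h', u]_B = 0.
  by apply/eqP; rewrite -hermsymmx_orthomxE // (submx_trans h'H Hu).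
have qAx : qform A x = qform A h + l * l^* * a.
  by rewrite -qformD_ortho // /h subrK.
have qBx : qform B x = qform B h' + l * l^* * beta.
  by rewrite -qformD_ortho // /h' /u /h scalerBr addrACA subrr addr0 subrK.
have -> : qform (t *: A + B) x
          = (t * qform A h + qform B h') + l * l^* * (t * a + beta).
  by rewrite qform_scaleD qAx qBx; ring.
apply: ltr_wpDl; last by rewrite mulr_gt0 ?mul_conjC_gt0.
by rewrite addr_ge0 ?(mulr_ge0 t_ge0) ?psdA // (pos_def_semidef_on pdB).
Qed.

End HyperplaneExtension.

Theorem mainTheorem7 (C : numClosedFieldType) (n : nat) (I : Type)
  (M : I -> 'M[C]_n)
  (herm : forall j, M j \is hermsymmx)
  (V : 'M[C]_n) (Vmin : minimal_wrt_span M V) :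
  forall A : 'M[C]_n, in_real_span M A ->
    pos_semidef_on A V -> zero_on A V.
Proof.
move=> A spA psdA v vV; apply/eqP/negPn/negP => qAv_neq0.
have [_ [indefV minV]] := Vmin.
have hA := in_real_span_hermsymmx herm spA.
apply: (minV _ (hyperplane_neq0 hA psdA vV (indefV A spA))
                (hyperplane_ltmx hA vV qAv_neq0)) => B spB pdB.
have [t t_real pd_tAB] := hyperplane_pos_def_extension hA psdA vV qAv_neq0
                            (in_real_span_hermsymmx herm spB) pdB.
exact: indefV _ (in_real_span_lin t_real spA spB) pd_tAB.
Qed.
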